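(* Let $\mathbf{p}$ be a list of explainable predicate constants, let $R$ be an S-rule $L_1\leftrightarrow L_2\Leftarrow G$, and let $R_1$, $R_2$ be the D-rules $L_1\lor\overline{L_2}\Leftarrow G$ and $\overline{L_1}\lor L_2\Leftarrow G$. Then the conjunction $CC$ of completeness constraints for $\mathbf{p}$ intuitionistically entails $\mathrm{tr}_s[R]\leftrightarrow\mathrm{tr}_d[R_1]\land\mathrm{tr}_d[R_2]$.
   Context: $G$ is a first-order formula without $\to$; $L_1,L_2$ are literals whose predicate symbols belong to $\mathbf{p}$; $\overline{L}$ denotes the literal complementary to $L$ (i.e. $\overline{A}=\neg A$, $\overline{\neg A}=A$). For each $p\in\mathbf{p}$, $\widehat p$ is a new predicate constant of the same arity; for $A=p(\mathbf{t})$, $\widehat A=\widehat p(\mathbf{t})$; $\widetilde\forall$ is universal closure. $\mathrm{tr}_s[p_1(\mathbf{t}^1)\leftrightarrow p_2(\mathbf{t}^2)\Leftarrow G]=\mathrm{tr}_s[\neg p_1(\mathbf{t}^1)\leftrightarrow\neg p_2(\mathbf{t}^2)\Leftarrow G]$ is the conjunction of $\widetilde\forall(\neg\neg G\land p_1(\mathbf{t}^1)\to p_2(\mathbf{t}^2))$, $\widetilde\forall(\neg\neg G\land p_2(\mathbf{t}^2)\to p_1(\mathbf{t}^1))$, $\widetilde\forall(\neg\neg G\land \widehat{p_1}(\mathbf{t}^1)\to \widehat{p_2}(\mathbf{t}^2))$, $\widetilde\forall(\neg\neg G\land \widehat{p_2}(\mathbf{t}^2)\to \widehat{p_1}(\mathbf{t}^1))$;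 $\mathrm{tr}_s[\neg p_1(\mathbf{t}^1)\leftrightarrow p_2(\mathbf{t}^2)\Leftarrow G]=\mathrm{tr}_s[p_1(\mathbf{t}^1)\leftrightarrow\neg p_2(\mathbf{t}^2)\Leftarrow G]$ is the conjunction of $\widetilde\forall(\neg\neg G\land \widehat{p_1}(\mathbf{t}^1)\to p_2(\mathbf{t}^2))$, $\widetilde\forall(\neg\neg G\land p_2(\mathbf{t}^2)\to \widehat{p_1}(\mathbf{t}^1))$, $\widetilde\forall(\neg\neg G\land p_1(\mathbf{t}^1)\to \widehat{p_2}(\mathbf{t}^2))$, $\widetilde\forall(\neg\neg G\land \widehat{p_2}(\mathbf{t}^2)\to p_1(\mathbf{t}^1))$. For a D-rule $\bigvee_{A\in Pos}A\lor\bigvee_{A\in Neg}\neg A\Leftarrow G$ ($Pos,Neg$ sets of atoms), $\mathrm{tr}_d$ gives $\widetilde\forall\big(\neg\neg G\land\bigwedge_{A\in Pos}(\widehat A\lor\neg\widehat A)\land\bigwedge_{A\in Neg}(A\lor\neg A)\to\bigvee_{A\in Pos}A\lor\bigvee_{A\in Neg}\widehat A\big)$. $CC$ is the conjunction over $p\in\mathbf{p}$ of $\forall\mathbf{x}\neg(p(\mathbf{x})\land\widehat p(\mathbf{x}))$ and $\forall\mathbf{x}\neg(\neg p(\mathbf{x})\land\neg\widehat p(\mathbf{x}))$. Entailment is in first-order intuitionistic logic. *)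

(* Deep embedding of first-order intuitionistic logic with
   Kripke semantics (increasing domains), which is sound and complete for
   intuitionistic first-order entailment. *)
From Stdlib Require Import List Arith.
Import ListNotations.

Inductive term : Type :=
| TVar : nat -> term
| TFun : nat -> list term -> term.

(* Predicate symbols: original ones p, and the fresh copies p-hat. *)
Inductive psym : Type :=
| Orig : nat -> psym
| Hat  : nat -> psym.

Inductive formula : Type :=
| FAtom   : psym -> list term -> formula
| FEq     : term -> term -> formula
| FBot    : formula
| FTop    : formula
| FNeg    : formula -> formula
| FAnd    : formula -> formula -> formula
| FOr     : formula -> formula -> formula
| FImp    : formula -> formula -> formula
| FForall : nat -> formula -> formula
| FExists : nat -> formula -> formula.

Definition FIff (A B : formula) : formula := FAnd (FImp A B) (FImp B A).

Fixpoint fv_term (t : term) : list nat :=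
  match t with
  | TVar x => [x]
  | TFun _ ts => (fix go (l : list term) : list nat :=
                    match l with [] => [] | u :: l' => fv_term u ++ go l' end) ts
  end.

Definition fv_terms (ts : list term) : list nat := flat_map fv_term ts.

Fixpoint fv (F : formula) : list nat :=
  match F with
  | FAtom _ ts => fv_terms ts
  | FEq t1 t2 => fv_term t1 ++ fv_term t2
  | FBot | FTop => []
  | FNeg A => fv A
  | FAnd A B | FOr A B | FImp A B => fv A ++ fv B
  | FForall x A | FExists x A => remove Nat.eq_dec x (fv A)
  end.

Definition uclose (F : formula) : formula :=
  fold_right FForall F (nodup Nat.eq_dec (fv F)).

Fixpoint no_imp (F : formula) : Prop :=
  match F with
  | FAtom _ _ | FEq _ _ | FBot | FTop => True
  | FNeg A | FForall _ A | FExists _ A => no_imp A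
  | FAnd A B | FOr A B => no_imp A /\ no_imp B
  | FImp _ _ => False
  end.

Fixpoint hat_free (F : formula) : Prop :=
  match F with
  | FAtom (Hat _) _ => False
  | FAtom (Orig _) _ | FEq _ _ | FBot | FTop => True
  | FNeg A | FForall _ A | FExists _ A => hat_free A
  | FAnd A B | FOr A B | FImp A B => hat_free A /\ hat_free B
  end.

Definition bigAnd (l : list formula) : formula := fold_right FAnd FTop l.
Definition bigOr  (l : list formula) : formula := fold_right FOr FBot l.

Definition atom : Type := (nat * list term)%type.
Definition atomF (A : atom) : formula := FAtom (Orig (fst A)) (snd A).
Definition hatF  (A : atom) : formula := FAtom (Hat (fst A)) (snd A).

(* A literal: (true, A) is A, (false, A) is \neg A. *)
Record literal : Type := Lit { lpos : bool; latom : atom }.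
Definition compl (L : literal) : literal := Lit (negb (lpos L)) (latom L).

Definition nnF (G : formula) : formula := FNeg (FNeg G).

Definition tr_s (L1 L2 : literal) (G : formula) : formula :=
  let A1 := atomF (latom L1) in let A2 := atomF (latom L2) in
  let H1 := hatF (latom L1) in let H2 := hatF (latom L2) in
  let r := fun X Y => uclose (FImp (FAnd (nnF G) X) Y) in
  if Bool.eqb (lpos L1) (lpos L2) then
    bigAnd [r A1 A2; r A2 A1; r H1 H2; r H2 H1]
  else
    bigAnd [r H1 A2; r A2 H1; r A1 H2; r H2 A1].

(* tr_d for the D-rule  \/_{A in Pos} A \/ \/_{A in Neg} \neg A <= G *)
Definition tr_d_PN (Pos Neg : list atom) (G : formula) : formula :=
  uclose (FImp
    (FAnd (nnF G)
      (FAnd (bigAnd (map (fun A => FOr (hatF A) (FNeg (hatF A))) Pos))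
            (bigAnd (map (fun A => FOr (atomF A) (FNeg (atomF A))) Neg))))
    (FOr (bigOr (map atomF Pos)) (bigOr (map hatF Neg)))).

Definition tr_d (head : list literal) (G : formula) : formula :=
  tr_d_PN (map latom (filter lpos head))
          (map latom (filter (fun L => negb (lpos L)) head)) G.

Definition var_tuple (n : nat) : list term := map TVar (seq 0 n).
Definition forall_tuple (n : nat) (F : formula) : formula :=
  fold_right FForall F (seq 0 n).

Definition CC (ar : nat -> nat) (ps : list nat) : formula :=
  bigAnd (flat_map (fun p =>
    let x := var_tuple (ar p) in
    [ forall_tuple (ar p) (FNeg (FAnd (FAtom (Orig p) x) (FAtom (Hat p) x)));
      forall_tuple (ar p) (FNeg (FAnd (FNeg (FAtom (Orig p) x))
                                      (FNeg (FAtom (Hat p) x)))) ]) ps).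

Record kmodel : Type := KModel {
  kW : Type;
  kle : kW -> kW -> Prop;
  kle_refl : forall w, kle w w;
  kle_trans : forall u v w, kle u v -> kle v w -> kle u w;
  kU : Type;
  kdom : kW -> kU -> Prop;
  kdom_mono : forall w w' d, kle w w' -> kdom w d -> kdom w' d;
  kfun : nat -> list kU -> kU;
  kfun_dom : forall w f ds, Forall (kdom w) ds -> kdom w (kfun f ds);
  kpred : kW -> psym -> list kU -> Prop;
  kpred_mono : forall w w' p ds, kle w w' -> kpred w p ds -> kpred w' p ds
}.

Section Sem.
Variable M : kmodel.

Fixpoint eval (rho : nat -> kU M) (t : term) : kU M :=
  match t with
  | TVar x => rho x
  | TFun f ts => kfun M f ((fix go (l : list term) : list (kU M) :=
                   match l with [] => [] | u :: l' => eval rho u :: go l' end) ts)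
  end.

Definition upd (rho : nat -> kU M) (x : nat) (d : kU M) : nat -> kU M :=
  fun y => if Nat.eqb y x then d else rho y.

Fixpoint forces (w : kW M) (rho : nat -> kU M) (F : formula) : Prop :=
  match F with
  | FAtom p ts => kpred M w p (map (eval rho) ts)
  | FEq t1 t2 => eval rho t1 = eval rho t2
  | FBot => False
  | FTop => True
  | FNeg A => forall w', kle M w w' -> ~ forces w' rho A
  | FAnd A B => forces w rho A /\ forces w rho B
  | FOr A B => forces w rho A \/ forces w rho B
  | FImp A B => forall w', kle M w w' -> forces w' rho A -> forces w' rho B
  | FForall x A => forall w', kle M w w' ->
        forall d, kdom M w' d -> forces w' (upd rho x d) A
  | FExists x A => exists d, kdom M w d /\ forces w (upd rho x d) A
  end.
End Sem.

Definition ientails (Gamma : formula) (F : formula) : Prop :=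
  forall (M : kmodel) (w : kW M) (rho : nat -> kU M),
    (forall x, kdom M w (rho x)) ->
    forces M w rho Gamma -> forces M w rho F.

(* Read a literal [L] as the pair (L+, L-) = (A, A^) if L = A and (A^, A) if L = ~A, so that
   complementation swaps the pair.  In a Kripke model, tr_s[L1 <-> L2 <= G] says that under
   ~~G we have L1+ <-> L2+ and L1- <-> L2-, while tr_d of the D-rule with head L1 \/ L2 says
   that under ~~G, once L1- and L2- are each decided (X \/ ~X), L1+ or L2+ holds.  CC makes
   every pair (L+, L-) exclusive and not jointly refuted.  The equivalence is then an
   intuitionistic argument in the cone above a world: from the two D-rules and L1+, the
   formula L2- is refuted (it would give L1- or L2+, both clashing with exclusivity), so the
   D-rule with L1+ and ~L2- decided yields L2+; conversely, if a D-rule premise holds but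
   neither disjunct, then L2+ and L2- are both refuted, against CC.  All five universal
   closures bind the same variables, so the argument runs valuation by valuation. *)

From Stdlib Require Import List Arith Lia FunctionalExtensionality.
Import ListNotations.

Section Rules.
Variable M : kmodel.
Notation W := (kW M).

Definition persistent (P : W -> Prop) := forall v u, kle M v u -> P v -> P u.
Definition refuted (P : W -> Prop) (v : W) := forall u, kle M v u -> ~ P u.
Definition decided (P : W -> Prop) (v : W) := P v \/ refuted P v.

(* Primitive projections make [sem_compl (sem_compl a)] convertible to [a]. *)
#[projections(primitive)]
Record sem_lit := SemLit { holds : W -> Prop; fails : W -> Prop }.

Definition sem_compl (a : sem_lit) := SemLit (fails a) (holds a).

Variables (U g : W -> Prop).
Hypothesis U_up : forall v u, kle M v u -> U v -> U u.
Hypothesis g_persistent : persistent g.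

Definition lit_persistent (a : sem_lit) := persistent (holds a) /\ persistent (fails a).

Definition complementary (a : sem_lit) := forall v, U v ->
  ~ (holds a v /\ fails a v) /\ ~ (refuted (holds a) v /\ refuted (fails a) v).

Definition srule (a b : sem_lit) := forall v, U v -> g v ->
  (holds a v <-> holds b v) /\ (fails a v <-> fails b v).

Definition drule (a b : sem_lit) := forall v, U v -> g v ->
  decided (fails a) v -> decided (fails b) v -> holds a v \/ holds b v.

Lemma drule_comm a b : drule a b -> drule b a.
Proof. intros D v Hv Hg Ha Hb; destruct (D v Hv Hg Hb Ha); tauto. Qed.

Lemma srule_compl a b : srule a b -> srule (sem_compl a) (sem_compl b).
Proof. intros S v Hv Hg; simpl; specialize (S v Hv Hg); tauto. Qed.

Lemma complementary_compl a : complementary a -> complementary (sem_compl a).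
Proof. intros C v Hv; simpl; specialize (C v Hv); tauto. Qed.

(* [fails b] is refuted above [v]: there the D-rule would give [fails a] or [holds b]. *)
Lemma holds_of_drule a b :
  complementary a -> complementary b -> persistent (holds a) ->
  drule (sem_compl a) b -> forall v, U v -> g v -> holds a v -> holds b v.
Proof.
  intros Ca Cb Pa D v Hv Hg Ha.
  assert (Nb : refuted (fails b) v).
  { intros u Hu Hbu.
    assert (Hu' := U_up _ _ Hu Hv).
    destruct (D u Hu' (g_persistent _ _ Hu Hg) (or_introl (Pa _ _ Hu Ha)) (or_introl Hbu))
      as [Hau | Hbu'].
    - exact (proj1 (Ca u Hu') (conj (Pa _ _ Hu Ha) Hau)).
    - exact (proj1 (Cb u Hu') (conj Hbu' Hbu)). }
  destruct (D v Hv Hg (or_introl Ha) (or_intror Nb)) as [Hfa | Hb]; [| exact Hb].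
  exfalso; exact (proj1 (Ca v Hv) (conj Ha Hfa)).
Qed.

Lemma srule_of_drules a b :
  complementary a -> complementary b -> lit_persistent a -> lit_persistent b ->
  drule a (sem_compl b) -> drule (sem_compl a) b -> srule a b.
Proof.
  intros Ca Cb [Pa Pa'] [Pb Pb'] D1 D2 v Hv Hg.
  pose proof (complementary_compl _ Ca) as Ca'.
  pose proof (complementary_compl _ Cb) as Cb'.
  repeat split; intro H.
  - exact (holds_of_drule a b Ca Cb Pa D2 v Hv Hg H).
  - exact (holds_of_drule b a Cb Ca Pb (drule_comm _ _ D1) v Hv Hg H).
  - exact (holds_of_drule (sem_compl a) (sem_compl b) Ca' Cb' Pa' D1 v Hv Hg H).
  - exact (holds_of_drule (sem_compl b) (sem_compl a) Cb' Ca' Pb' (drule_comm _ _ D2) v Hv Hg H).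
Qed.

(* If neither disjunct is available, [holds b] and [fails b] are both refuted above [v]. *)
Lemma drule_compl_of_srule a b : complementary b -> srule a b -> drule a (sem_compl b).
Proof.
  intros Cb S v Hv Hg Da Db; simpl in Db.
  destruct Da as [Hfa | Nfa]; [right; exact (proj1 (proj2 (S v Hv Hg)) Hfa) |].
  destruct Db as [Hb | Nb]; [left; exact (proj2 (proj1 (S v Hv Hg)) Hb) |].
  exfalso; apply (proj2 (Cb v Hv)); split; [exact Nb |].
  intros u Hu Hfb.
  exact (Nfa u Hu (proj2 (proj2 (S u (U_up _ _ Hu Hv) (g_persistent _ _ Hu Hg))) Hfb)).
Qed.

Theorem srule_iff_drules a b :
  complementary a -> complementary b -> lit_persistent a -> lit_persistent b ->
  srule a b <-> drule a (sem_compl b) /\ drule (sem_compl a) b.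
Proof.
  intros Ca Cb Pa Pb; split.
  - intros S; split.
    + exact (drule_compl_of_srule a b Cb S).
    + exact (drule_compl_of_srule (sem_compl a) (sem_compl b) (complementary_compl _ Cb)
               (srule_compl _ _ S)).
  - intros [D1 D2]; exact (srule_of_drules a b Ca Cb Pa Pb D1 D2).
Qed.

End Rules.

Section Forcing.
Variable M : kmodel.

Lemma forces_mono (F : formula) w w' rho :
  kle M w w' -> forces M w rho F -> forces M w' rho F.
Proof.
  revert w w' rho; induction F; intros w w' rho Hle H; simpl in *.
  - exact (kpred_mono M _ _ _ _ Hle H).
  - exact H.
  - exact H.
  - exact I.
  - intros w'' H'; apply H; exact (kle_trans M _ _ _ Hle H').
  - destruct H; split; eauto.
  - destruct H; [left | right]; eauto.
  - intros w'' H'; apply H; exact (kle_trans M _ _ _ Hle H').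
  - intros w'' H'; apply H; exact (kle_trans M _ _ _ Hle H').
  - destruct H as [d [Hd H]]; exists d; split; [exact (kdom_mono M _ _ _ Hle Hd) | eauto].
Qed.

Definition val_in (w : kW M) (rho : nat -> kU M) := forall x, kdom M w (rho x).

Lemma forces_persistent F rho : persistent M (fun v => forces M v rho F).
Proof. intros v u Hle; exact (forces_mono F v u rho Hle). Qed.

Lemma val_in_mono w w' rho : kle M w w' -> val_in w rho -> val_in w' rho.
Proof. intros Hle Hd x; exact (kdom_mono M _ _ _ Hle (Hd x)). Qed.

Lemma eval_dom w rho : val_in w rho -> forall t, kdom M w (eval M rho t).
Proof.
  intros Hd; fix IH 1; intros [x | f ts]; simpl.
  - apply Hd.
  - apply kfun_dom; induction ts as [| t ts IHts]; constructor; [apply IH | exact IHts].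
Qed.

Definition agree_off (S : list nat) (rho rho' : nat -> kU M) :=
  forall x, ~ In x S -> rho' x = rho x.

Lemma agree_off_cons xs x d rho rho' :
  agree_off xs (upd M rho x d) rho' -> agree_off (x :: xs) rho rho'.
Proof.
  intros Hag y Hy; rewrite Hag by (intro; apply Hy; right; assumption).
  unfold upd; destruct (Nat.eqb_spec y x) as [-> | _]; [exfalso; apply Hy; left |]; reflexivity.
Qed.

Lemma agree_off_uncons xs x rho rho' :
  agree_off (x :: xs) rho rho' -> agree_off xs (upd M rho x (rho' x)) rho'.
Proof.
  intros Hag y Hy; unfold upd; destruct (Nat.eqb_spec y x) as [-> | Hne]; [reflexivity |].
  apply Hag; intros [-> | Hin]; [exact (Hne eq_refl) | exact (Hy Hin)].
Qed.

Lemma val_in_upd w rho x d : val_in w rho -> kdom M w d -> val_in w (upd M rho x d).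
Proof. intros Hd Hdd y; unfold upd; destruct (Nat.eqb y x); auto. Qed.

Lemma forces_fold_forall (F : formula) xs w rho : val_in w rho ->
  forces M w rho (fold_right FForall F xs) <->
  forall w' rho', kle M w w' -> agree_off xs rho rho' -> val_in w' rho' ->
    forces M w' rho' F.
Proof.
  revert w rho; induction xs as [| x xs IH]; intros w rho Hd; simpl.
  - split.
    + intros H w' rho' Hle Hag _.
      replace rho' with rho
        by (apply functional_extensionality; intro y; symmetry; apply Hag; auto).
      exact (forces_mono _ _ _ _ Hle H).
    + intros H; exact (H w rho (kle_refl M w) (fun _ _ => eq_refl) Hd).
  - split.
    + intros H w' rho' Hle Hag Hd'.
      specialize (H w' Hle (rho' x) (Hd' x)).
      rewrite IH in H by exact (val_in_upd _ _ _ _ (val_in_mono _ _ _ Hle Hd) (Hd' x)).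
      exact (H w' rho' (kle_refl M w') (agree_off_uncons _ _ _ _ Hag) Hd').
    + intros H w1 Hle d Hdd.
      rewrite IH by exact (val_in_upd _ _ _ _ (val_in_mono _ _ _ Hle Hd) Hdd).
      intros w'' rho'' Hle' Hag Hd''.
      exact (H w'' rho'' (kle_trans M _ _ _ Hle Hle') (agree_off_cons _ _ _ _ _ Hag) Hd'').
Qed.

Lemma forces_bigAnd_In w r l F : forces M w r (bigAnd l) -> In F l -> forces M w r F.
Proof. induction l as [| F' l IH]; simpl; [tauto |]. intros [HF Hl] [<- | Hin]; auto. Qed.

Definition above (w : kW M) (r : nat -> kU M) (v : kW M) := kle M w v /\ val_in v r.

Lemma above_up w r v u : kle M v u -> above w r v -> above w r u.
Proof.
  intros Hle [Hwv Hdv]; exact (conj (kle_trans M _ _ _ Hwv Hle) (val_in_mono _ _ _ Hle Hdv)).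
Qed.

Lemma forces_uclose_imp (P C : formula) S w rho :
  (forall x, In x (fv (FImp P C)) <-> In x S) -> val_in w rho ->
  forces M w rho (uclose (FImp P C)) <->
  forall rho', agree_off S rho rho' ->
    forall v, above w rho' v -> forces M v rho' P -> forces M v rho' C.
Proof.
  intros HS Hd; unfold uclose; rewrite forces_fold_forall by exact Hd.
  assert (Hvars : forall rho', agree_off S rho rho' <->
            agree_off (nodup Nat.eq_dec (fv (FImp P C))) rho rho').
  { intros rho'; unfold agree_off; setoid_rewrite (nodup_In Nat.eq_dec); setoid_rewrite HS.
    reflexivity. }
  split.
  - intros H rho' Hag v [Hle Hdv] HP.
    exact (H v rho' Hle (proj1 (Hvars rho') Hag) Hdv v (kle_refl M v) HP).
  - intros H w' rho' Hle Hag Hd' v Hle' HP.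
    exact (H rho' (proj2 (Hvars rho') Hag) v
             (conj (kle_trans M _ _ _ Hle Hle') (val_in_mono _ _ _ Hle' Hd')) HP).
Qed.

End Forcing.

Definition lit_true (L : literal) : formula :=
  if lpos L then atomF (latom L) else hatF (latom L).
Definition lit_false (L : literal) : formula :=
  if lpos L then hatF (latom L) else atomF (latom L).

Definition lit_sem (M : kmodel) (r : nat -> kU M) (L : literal) : sem_lit M :=
  SemLit M (fun v => forces M v r (lit_true L)) (fun v => forces M v r (lit_false L)).

Lemma lit_sem_compl M r L : lit_sem M r (compl L) = sem_compl M (lit_sem M r L).
Proof. destruct L as [[|] A]; reflexivity. Qed.

Definition rule_vars (L1 L2 : literal) (G : formula) : list nat :=
  fv G ++ fv_terms (snd (latom L1)) ++ fv_terms (snd (latom L2)).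

Ltac rule_vars_tac :=
  intro; unfold rule_vars, atomF, hatF, fv_terms; cbn; rewrite ?in_app_iff; cbn; tauto.

Lemma forces_tr_s M w rho L1 L2 G : val_in M w rho ->
  forces M w rho (tr_s L1 L2 G) <->
  forall r, agree_off M (rule_vars L1 L2 G) rho r ->
    srule M (above M w r) (fun v => forces M v r (nnF G)) (lit_sem M r L1) (lit_sem M r L2).
Proof.
  intros Hd.
  destruct L1 as [[|] [p1 ts1]], L2 as [[|] [p2 ts2]];
    unfold tr_s, bigAnd; cbn [lpos latom Bool.eqb fold_right forces];
    match goal with |- context [agree_off _ ?S _ _] =>
      repeat rewrite (fun P C H => forces_uclose_imp M P C S w rho H Hd); [| rule_vars_tac ..]
    end;
    unfold srule, above, lit_sem, lit_true, lit_false; cbn [holds fails lpos latom forces];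
    firstorder.
Qed.

Lemma forces_tr_d M w rho L1 L2 G : val_in M w rho ->
  forces M w rho (tr_d [L1; L2] G) <->
  forall r, agree_off M (rule_vars L1 L2 G) rho r ->
    drule M (above M w r) (fun v => forces M v r (nnF G)) (lit_sem M r L1) (lit_sem M r L2).
Proof.
  intros Hd.
  destruct L1 as [[|] [p1 ts1]], L2 as [[|] [p2 ts2]];
    unfold tr_d, tr_d_PN; cbn [filter lpos latom negb map];
    match goal with |- context [agree_off _ ?S _ _] =>
      rewrite (fun P C H => forces_uclose_imp M P C S w rho H Hd) by rule_vars_tac
    end;
    unfold drule, decided, refuted, above, lit_sem, lit_true, lit_false, bigAnd, bigOr;
    cbn [holds fails lpos latom forces fold_right];
    split; intros H r Hr v Hv; specialize (H r Hr v Hv); tauto.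
Qed.

Lemma map_nth_seq_dflt {A : Type} (l : list A) (d : nat -> A) :
  map (fun i => nth i l (d i)) (seq 0 (length l)) = l.
Proof.
  revert d; induction l as [| x l IH]; intros d; simpl; [reflexivity |].
  f_equal; rewrite <- seq_shift, map_map; exact (IH (fun i => d (S i))).
Qed.

Section CompletenessConstraints.
Variable M : kmodel.

Definition tuple_val (ds : list (kU M)) (rho : nat -> kU M) (i : nat) := nth i ds (rho i).

Lemma eval_var_tuple ds rho :
  map (eval M (tuple_val ds rho)) (var_tuple (length ds)) = ds.
Proof. unfold var_tuple; rewrite map_map; exact (map_nth_seq_dflt ds rho). Qed.

Lemma val_in_tuple_val w v ds rho : val_in M w rho -> kle M w v -> Forall (kdom M v) ds ->
  val_in M v (tuple_val ds rho).
Proof.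
  intros Hd Hle Hds i; unfold tuple_val.
  destruct (Nat.lt_ge_cases i (length ds)) as [Hi | Hi].
  - exact (proj1 (Forall_forall _ _) Hds _ (nth_In ds (rho i) Hi)).
  - rewrite nth_overflow by exact Hi; exact (val_in_mono M _ _ _ Hle Hd i).
Qed.

Lemma forces_forall_tuple w rho n F : val_in M w rho -> forces M w rho (forall_tuple n F) ->
  forall v ds, kle M w v -> length ds = n -> Forall (kdom M v) ds ->
  forces M v (tuple_val ds rho) F.
Proof.
  intros Hd HF v ds Hle Hlen Hds.
  unfold forall_tuple in HF; rewrite forces_fold_forall in HF by exact Hd.
  apply (HF v _ Hle); [| exact (val_in_tuple_val _ _ _ _ Hd Hle Hds)].
  intros i Hi; unfold tuple_val; apply nth_overflow.
  rewrite in_seq in Hi; lia.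
Qed.

Lemma CC_complementary ar ps w rho L : val_in M w rho -> forces M w rho (CC ar ps) ->
  In (fst (latom L)) ps -> length (snd (latom L)) = ar (fst (latom L)) ->
  forall r, complementary M (above M w r) (lit_sem M r L).
Proof.
  destruct L as [b [p ts]]; cbn [fst snd latom].
  intros Hd HCC Hp Hlen r v [Hle Hdv].
  set (ds := map (eval M r) ts).
  assert (Hds : Forall (kdom M v) ds)
    by (apply Forall_forall; intros d Hin; apply in_map_iff in Hin as [t [<- _]];
        exact (eval_dom M _ _ Hdv t)).
  assert (Hlen' : length ds = ar p) by (unfold ds; rewrite length_map; exact Hlen).
  assert (HCCp : forall F, In F [forall_tuple (ar p)
        (FNeg (FAnd (FAtom (Orig p) (var_tuple (ar p))) (FAtom (Hat p) (var_tuple (ar p)))));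
      forall_tuple (ar p) (FNeg (FAnd (FNeg (FAtom (Orig p) (var_tuple (ar p))))
                                      (FNeg (FAtom (Hat p) (var_tuple (ar p))))))] ->
      forces M w rho F).
  { intros F HF; apply (forces_bigAnd_In M _ _ _ _ HCC), in_flat_map; exists p; auto. }
  pose proof (forces_forall_tuple _ _ _ _ Hd (HCCp _ (or_introl eq_refl)) v ds Hle Hlen' Hds)
    as Hexcl.
  pose proof (forces_forall_tuple _ _ _ _ Hd (HCCp _ (or_intror (or_introl eq_refl)))
                v ds Hle Hlen' Hds) as Hexh.
  rewrite <- Hlen' in Hexcl, Hexh; cbn [forces] in Hexcl, Hexh.
  rewrite eval_var_tuple in Hexcl, Hexh.
  specialize (Hexcl v (kle_refl M v)); specialize (Hexh v (kle_refl M v)).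
  destruct b; cbn; unfold refuted; tauto.
Qed.

End CompletenessConstraints.

Lemma tr_s_iff_tr_d M ar ps w rho L1 L2 G : val_in M w rho -> forces M w rho (CC ar ps) ->
  In (fst (latom L1)) ps -> In (fst (latom L2)) ps ->
  length (snd (latom L1)) = ar (fst (latom L1)) ->
  length (snd (latom L2)) = ar (fst (latom L2)) ->
  forces M w rho (tr_s L1 L2 G) <->
  forces M w rho (tr_d [L1; compl L2] G) /\ forces M w rho (tr_d [compl L1; L2] G).
Proof.
  intros Hd HCC Hp1 Hp2 Hl1 Hl2.
  rewrite forces_tr_s, !forces_tr_d by exact Hd.
  assert (Hrule : forall r,
    srule M (above M w r) (fun v => forces M v r (nnF G)) (lit_sem M r L1) (lit_sem M r L2) <->
    drule M (above M w r) (fun v => forces M v r (nnF G))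
      (lit_sem M r L1) (lit_sem M r (compl L2)) /\
    drule M (above M w r) (fun v => forces M v r (nnF G))
      (lit_sem M r (compl L1)) (lit_sem M r L2)).
  { intros r; rewrite !lit_sem_compl.
    apply srule_iff_drules;
      [ exact (above_up M w r) | apply forces_persistent
      | exact (CC_complementary M ar ps w rho L1 Hd HCC Hp1 Hl1 r)
      | exact (CC_complementary M ar ps w rho L2 Hd HCC Hp2 Hl2 r)
      | split; apply forces_persistent .. ]. }
  split.
  - intros H; split; intros r Hr; apply (Hrule r), H, Hr.
  - intros [H1 H2] r Hr; apply Hrule; exact (conj (H1 r Hr) (H2 r Hr)).
Qed.

Theorem lemma11 (ar : nat -> nat) (ps : list nat) (L1 L2 : literal) (G : formula) :
  In (fst (latom L1)) ps -> In (fst (latom L2)) ps ->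
  length (snd (latom L1)) = ar (fst (latom L1)) ->
  length (snd (latom L2)) = ar (fst (latom L2)) ->
  no_imp G -> hat_free G ->
  ientails (CC ar ps)
    (FIff (tr_s L1 L2 G)
          (FAnd (tr_d [L1; compl L2] G) (tr_d [compl L1; L2] G))).
Proof.
  intros Hp1 Hp2 Hl1 Hl2 _ _ M w rho Hd HCC.
  assert (Hequiv : forall w', kle M w w' ->
    forces M w' rho (tr_s L1 L2 G) <->
    forces M w' rho (tr_d [L1; compl L2] G) /\ forces M w' rho (tr_d [compl L1; L2] G)).
  { intros w' Hle.
    exact (tr_s_iff_tr_d M ar ps w' rho L1 L2 G (val_in_mono M _ _ _ Hle Hd)
             (forces_mono M _ _ _ _ Hle HCC) Hp1 Hp2 Hl1 Hl2). }
  split; intros w' Hle H; apply (Hequiv w' Hle), H.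
Qed.
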